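(* Let $d\in\mathbb{N}$, $N=d$, $\mathcal{N}=\{1,\dots,d\}$, and consider the switched system $x(t+1)=A_{\nu(t)}x(t)+b_{\nu(t)}\mu(t)$ with state set $\mathcal{X}=\mathbb{R}^d$ and set of admissible continuous controls $\mathcal{U}=\mathbb{R}$. Suppose each $A_i$, $i\in\mathcal{N}$, is a diagonal matrix with all diagonal entries nonzero, and each $b_i\in\mathbb{R}^d$ has its $i$-th entry nonzero and all other entries zero. Define $\mathcal{X}_0=\{0_d\}$, $\mathcal{X}_j=\{x\in\mathbb{R}^d: x_j\neq0,\ x_i=0 \text{ for all } i\neq j\}$ for $j=1,\dots,d$, and $\mathcal{X}_{d+1}=\mathbb{R}^d\setminus\bigcup_{j=0}^d\mathcal{X}_j$. Then $(\mathcal{X}_j)_{j=0}^{d+1}$ is a state-space abstraction of this switched system.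
   Context: A family $(\mathcal{X}_j)_{j=0}^n$ of subsets of $\mathcal{X}$ is a state-space abstraction of the switched system with subsystems $(A_i,b_i)$, $i\in\mathcal{N}$, and admissible continuous control set $\mathcal{U}$ if: (i) $\mathcal{X}_0=\{0_d\}$; (ii) the $\mathcal{X}_j$ are pairwise disjoint; (iii) $\bigcup_{j=0}^n\mathcal{X}_j=\mathcal{X}$; (iv) for each $j\in\{1,\dots,n\}$ and $i\in\mathcal{N}$ there is $k\in\{0,\dots,n\}$ with $A_ix\in\mathcal{X}_k$ for all $x\in\mathcal{X}_j$; (v) for each $j\in\{1,\dots,n\}$ and $i\in\mathcal{N}$ there is $\ell\in\{0,\dots,n\}$ such that for every $x\in\mathcal{X}_j$, $A_ix+b_i\mu(x)\in\mathcal{X}_\ell$ for some $\mu(x)\in\mathcal{U}\setminus\{0\}$. *)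

From HB Require Import structures.
From mathcomp Require Import all_boot all_order all_algebra.
From mathcomp Require Import reals.
Set Implicit Arguments. Unset Strict Implicit. Unset Printing Implicit Defensive.
Import Order.TTheory GRing.Theory Num.Theory.
Local Open Scope ring_scope.

(* State space R^d = column vectors 'cV[R]_d; subsets are predicates.
   Modes are indexed by a finite type I; the family (X_j)_{j=0}^n is
   indexed by 'I_n.+1, index ord0 playing the role of X_0. *)
Definition state_space_abstraction (R : realType) (d : nat) (I : finType)
  (A : I -> 'M[R]_d) (b : I -> 'cV[R]_d) (Xs : 'cV[R]_d -> Prop)
  (U : R -> Prop) (n : nat) (X : 'I_n.+1 -> 'cV[R]_d -> Prop) : Prop :=
  (forall x, X ord0 x <-> x = 0) /\
  (forall j k : 'I_n.+1, j != k -> forall x, ~ (X j x /\ X k x)) /\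
  (forall x, (exists j, X j x) <-> Xs x) /\
  (forall j : 'I_n.+1, j != ord0 -> forall i : I,
     exists k : 'I_n.+1, forall x, X j x -> X k (A i *m x)) /\
  (forall j : 'I_n.+1, j != ord0 -> forall i : I,
     exists l : 'I_n.+1, forall x, X j x ->
       exists mu, U mu /\ mu != 0 /\ X l (A i *m x + mu *: b i)).

Definition on_axis (R : realType) (d : nat) (k : 'I_d) (x : 'cV[R]_d) : Prop :=
  x k 0 != 0 /\ forall i : 'I_d, i != k -> x i 0 = 0.

(* The family X_0, X_1, ..., X_d, X_{d+1}; X_j (1 <= j <= d) is the
   axis of coordinate j (0-based coordinate j-1). *)
Definition axis_family (R : realType) (d : nat) (j : 'I_d.+2) (x : 'cV[R]_d) : Prop :=
  if val j == 0%N then x = 0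
  else if (val j <= d)%N then exists k : 'I_d, val j = k.+1 /\ on_axis k x
  else ~ (x = 0 \/ exists k : 'I_d, on_axis k x).

From HB Require Import structures.
From mathcomp Require Import all_boot all_order all_algebra.
From mathcomp Require Import reals.
Set Implicit Arguments. Unset Strict Implicit. Unset Printing Implicit Defensive.
Import Order.TTheory GRing.Theory Num.Theory.
Local Open Scope ring_scope.

(* Membership in X_j depends only on the support of x (its set of nonzero
   coordinates): X_0, X_1, ..., X_d, X_(d+1) collect the states with empty
   support, support {0}, ..., {d-1}, and support of size at least two.  So the
   family is the set of fibres of one index function of the support, which
   gives (i)-(iii), and an invertible diagonal A_i preserves supports, which
   gives (iv).  For (v) the control only acts on coordinate i: on the axis of
   coordinate i it can cancel that coordinate and reach 0; from any other
   nonzero state, a control making coordinate i nonzero leaves at least two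
   nonzero coordinates, i.e. lands in X_(d+1). *)

Lemma add_mul_neq0 (R : numDomainType) (a c : R) :
  c != 0 -> exists2 mu : R, mu != 0 & a + mu * c != 0.
Proof.
move=> c_neq0; have [ac0|ac_neq0] := eqVneq (a + c) 0.
  by exists 2; rewrite ?pnatr_eq0 // mulr2n mulrDl mul1r addrA ac0 add0r.
by exists 1; rewrite ?oner_eq0 ?mul1r.
Qed.

Lemma diag_mulmx_col (R : pzSemiRingType) (d : nat) (M : 'M[R]_d) (x : 'cV[R]_d) k :
  is_diag_mx M -> (M *m x) k 0 = M k k * x k 0.
Proof. by case/diag_mxP=> D ->; rewrite mul_diag_mx !mxE eqxx mulr1n. Qed.

Section Support.
Variables (R : realType) (d : nat).
Implicit Types (x : 'cV[R]_d) (S : {set 'I_d}) (i k : 'I_d) (j : 'I_d.+2).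

Definition support x : {set 'I_d} := [set k | x k 0 != 0].

Lemma support0 : support 0 = set0.
Proof. by apply/setP => k; rewrite !inE mxE eqxx. Qed.

Lemma support_eq0 x : (support x == set0) = (x == 0).
Proof.
apply/eqP/eqP => [S0|->]; last exact: support0.
apply/matrixP => k j; rewrite ord1 mxE.
by move/setP/(_ k): S0; rewrite !inE => /negbFE/eqP.
Qed.

Lemma on_axis_support k x : on_axis k x <-> support x = [set k].
Proof.
split=> [[xk xoff]|Sk].
  apply/setP => i; rewrite !inE; have [->//|ik] := eqVneq i k.
  by rewrite xoff ?eqxx.
have inS i : (x i 0 != 0) = (i == k) by move/setP/(_ i): Sk; rewrite !inE.
split=> [|i ik]; first by rewrite inS.
by apply/eqP; rewrite -[_ == 0]negbK inS ik.
Qed.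

Lemma card_support_gt1 x :
  (1 < #|support x|)%N <-> ~ (x = 0 \/ exists k, on_axis k x).
Proof.
split=> [gt1 [x0|[k /on_axis_support Sk]]|not_axis].
- by move: gt1; rewrite x0 support0 cards0.
- by move: gt1; rewrite Sk cards1.
rewrite ltnNge leq_eqVlt ltnS leqn0 cards_eq0 support_eq0.
apply/negP => /orP[/cards1P[k /on_axis_support xk]|/eqP x0]; apply: not_axis.
  by right; exists k.
by left.
Qed.

Definition axis_index S : 'I_d.+2 :=
  if S == set0 then ord0
  else if [pick k | S == [set k]] is Some k then inord k.+1 else ord_max.

Lemma val_inordS (k : 'I_d) : val (inord k.+1 : 'I_d.+2) = k.+1.
Proof. by apply: inordK; rewrite !ltnS ltnW. Qed.

Lemma axis_familyP j x : axis_family j x <-> j = axis_index (support x).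
Proof.
split=> [|->]; rewrite /axis_family /axis_index.
  case: eqP => [j0 x0|j_neq0]; first by rewrite x0 support0 eqxx; apply: val_inj.
  case: ifP => [_ [k [jk /on_axis_support Sk]]|jd not_axis].
    rewrite Sk -cards_eq0 cards1 /=.
    case: pickP => [k' /eqP/set1_inj <-|/(_ k)]; last by rewrite eqxx.
    by apply/eqP; rewrite -val_eqE /= jk val_inordS.
  have S_neq0 : support x != set0.
    by rewrite support_eq0; apply/eqP => x0; apply: not_axis; left.
  rewrite (negbTE S_neq0); case: pickP => [k /eqP/on_axis_support xk|_].
    by case: not_axis; right; exists k.
  by apply/eqP; rewrite -val_eqE /= eqn_leq -ltnS ltn_ord ltnNge jd.
have [S0|S_neq0] := eqVneq (support x) set0.
  by apply/eqP; rewrite -support_eq0 S0.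
case: pickP => [k /eqP/on_axis_support xk|no_axis].
  by rewrite val_inordS ltn_ord /=; exists k.
rewrite /= ltnn => -[x0|[k /on_axis_support Sk]].
  by move: S_neq0; rewrite x0 support0 eqxx.
by move: (no_axis k); rewrite Sk eqxx.
Qed.

Lemma axis_family_on_axis j k x : val j = k.+1 -> axis_family j x -> on_axis k x.
Proof.
rewrite /axis_family => -> /=; rewrite ltn_ord => -[k' [/succn_inj kk']].
by rewrite (val_inj kk').
Qed.

Lemma axis_family_off_axis j i x : axis_family j x -> j != ord0 -> val j != i.+1 ->
  exists2 k, k != i & x k 0 != 0.
Proof.
rewrite /axis_family; case: eqP => [j0 _ j_neq0|_].
  by case/eqP: j_neq0; apply: val_inj.
case: ifP => [_ [k [-> [xk _]]] _ ki|_ /card_support_gt1/card_gt1P[p [q [Sp Sq pq]]] _ _].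
  by exists k => //; apply: contraNneq ki => ->.
rewrite !inE in Sp Sq; have [pi|] := eqVneq p i; last by exists p.
by exists q; rewrite // -pi eq_sym.
Qed.

End Support.

Section Steering.
Variables (R : realType) (d : nat) (M : 'M[R]_d) (v : 'cV[R]_d) (i : 'I_d).
Hypotheses (M_diag : is_diag_mx M) (M_neq0 : forall k, M k k != 0).
Hypotheses (v_i : v i 0 != 0) (v_off : forall k, k != i -> v k 0 = 0).
Implicit Types (x : 'cV[R]_d) (k : 'I_d).

Lemma support_diag_mulmx x : support (M *m x) = support x.
Proof.
by apply/setP => k; rewrite !inE diag_mulmx_col // mulf_eq0 (negbTE (M_neq0 k)).
Qed.

Lemma steer_coord x mu k : (M *m x + mu *: v) k 0 = M k k * x k 0 + mu * v k 0.
Proof. by rewrite [LHS]mxE diag_mulmx_col // [X in _ + X]mxE. Qed.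

Lemma steer_axis_to0 x : on_axis i x -> exists2 mu, mu != 0 & M *m x + mu *: v = 0.
Proof.
move=> [xi x_off]; exists (- (M i i * x i 0) / v i 0).
  by rewrite mulf_neq0 ?invr_eq0 ?oppr_eq0 ?mulf_neq0.
apply/matrixP => k j; rewrite ord1 steer_coord [RHS]mxE.
have [->|ki] := eqVneq k i; first by rewrite divfK // addrN.
by rewrite (x_off k ki) (v_off ki) !mulr0 addr0.
Qed.

Lemma steer_off_axis x k : k != i -> x k 0 != 0 ->
  exists2 mu, mu != 0 & axis_family ord_max (M *m x + mu *: v).
Proof.
move=> ki xk; have [mu mu_neq0 yi] := add_mul_neq0 (M i i * x i 0) v_i.
have yk : (M *m x + mu *: v) k 0 != 0.
  by rewrite steer_coord (v_off ki) mulr0 addr0 mulf_neq0.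
exists mu => //; rewrite /axis_family /= ltnn; apply/card_support_gt1/card_gt1P.
by exists i, k; rewrite !inE yk steer_coord yi eq_sym ki.
Qed.

End Steering.

Theorem proposition1 (R : realType) (d : nat)
  (A : 'I_d -> 'M[R]_d) (b : 'I_d -> 'cV[R]_d)
  (hAdiag : forall i, is_diag_mx (A i))
  (hAnz : forall i k, A i k k != 0)
  (hbi : forall i, b i i 0 != 0)
  (hbo : forall i k, k != i -> b i k 0 = 0) :
  state_space_abstraction A b (fun _ => True) (fun _ => True)
    (@axis_family R d).
Proof.
split; first by move=> x; rewrite /axis_family.
split.
  by move=> j k jk x [/axis_familyP jx /axis_familyP kx]; rewrite jx kx eqxx in jk.
split.
  by move=> x; split=> // _; exists (axis_index (support x)); apply/axis_familyP.
split.
  move=> j _ i; exists j => x /axis_familyP jx; apply/axis_familyP.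
  by rewrite support_diag_mulmx.
move=> j j_neq0 i; have [ji|ji] := eqVneq (val j) i.+1.
  exists ord0 => x /(axis_family_on_axis ji) xi.
  have [mu mu_neq0 y0] := steer_axis_to0 (hAdiag i) (hAnz i) (hbi i) (hbo i) xi.
  by exists mu; rewrite /axis_family /= y0.
exists ord_max => x /axis_family_off_axis/(_ j_neq0 ji)[k ki xk].
have [mu mu_neq0 y_max] := steer_off_axis (hAdiag i) (hAnz i) (hbi i) (hbo i) ki xk.
by exists mu.
Qed.
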